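(* Let $X$ and $Y$ be random variables with values in $\mathbb{N}=\{1,2,\dots\}$ whose probability mass functions are non-increasing on $\mathbb{N}$. If $X\le_{st}Y$ (i.e. $\Pr(X>t)\le\Pr(Y>t)$ for all $t\in\mathbb{R}$), then $X\le_{wd}Y$.
   Context: For a real random variable $X$, its Lévy concentration function is $Q_X(\varepsilon)=\sup_{x_0\in\mathbb{R}}\Pr\{X\in[x_0,x_0+\varepsilon]\}$, $\varepsilon>0$. For random variables $X,Y$, write $X\le_{wd}Y$ if $Q_X(\varepsilon)\ge Q_Y(\varepsilon)$ for all $\varepsilon>0$. *)

From HB Require Import structures.
From mathcomp Require Import all_boot all_order all_algebra.
From mathcomp Require Import all_classical all_reals all_analysis.
Set Implicit Arguments. Unset Strict Implicit. Unset Printing Implicit Defensive.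
Import Order.TTheory GRing.Theory Num.Theory.
Local Open Scope classical_set_scope.
Local Open Scope ring_scope.

Definition levy_conc (d : measure_display) (T : measurableType d) (R : realType)
  (P : probability T R) (X : {RV P >-> R}) (e : R) : \bar R :=
  ereal_sup [set P (X @^-1` `[x0, x0 + e]) | x0 in [set: R]].

Definition pmass (d : measure_display) (T : measurableType d) (R : realType)
  (P : probability T R) (X : {RV P >-> R}) (n : nat) : \bar R :=
  P (X @^-1` [set n%:R]).

From HB Require Import structures.
From mathcomp Require Import all_boot all_order all_algebra.
From mathcomp Require Import all_classical all_reals all_analysis.
From mathcomp Require Import lra.
Set Implicit Arguments. Unset Strict Implicit. Unset Printing Implicit Defensive.
Import Order.TTheory GRing.Theory Num.Theory.
Local Open Scope classical_set_scope.
Local Open Scope ring_scope.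

(* For Y with values in {1, 2, ...} and non-increasing mass function the
   concentration function is attained at x0 = 1: moving a window [c, c + e]
   one unit to the right loses the atom c and gains at most the single atom
   in ]c + e, c + e + 1], whose mass is no larger.  Hence
   Q_Y(e) = P(Y <= 1 + e) = 1 - P(Y > 1 + e), and stochastic dominance gives
   Q_Y(e) <= 1 - P(X > 1 + e) = P(X <= 1 + e) <= Q_X(e). *)

Lemma le_measure_setD (d : measure_display) (T : measurableType d)
    (R : realType) (mu : {measure set T -> \bar R}) (A B : set T) :
  measurable A -> measurable B ->
  (mu (A `\` B) <= mu (B `\` A))%E -> (mu A <= mu B)%E.
Proof.
move=> mA mB le_AB_BA.
by rewrite (measureDI mu mA mB) (measureDI mu mB mA) setIC leeD2r.
Qed.

Lemma eq_natr_unit_itv (R : realFieldType) (x : R) (m n : nat) :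
  x < m%:R <= x + 1 -> x < n%:R <= x + 1 -> m = n.
Proof.
move=> /andP[xm mx] /andP[xn nx].
have m_lt : m%:R < n.+1%:R :> R by rewrite -natr1; lra.
have n_lt : n%:R < m.+1%:R :> R by rewrite -natr1; lra.
by apply/eqP; rewrite eqn_leq -(ltnS m) -(ltnS n) -!(ltr_nat R) m_lt n_lt.
Qed.

Lemma least_pos_nat_ge (R : realType) (x : R) :
  exists c : nat, [/\ (0 < c)%N, x <= c%:R &
    forall n : nat, (0 < n)%N -> x <= n%:R -> (c <= n)%N].
Proof.
have ex_ge : exists n : nat, (0 < n)%N && (x <= n%:R).
  exists (Num.truncn `|x|).+1; apply/andP; split => //.
  exact/ltW/(le_lt_trans (ler_norm x))/truncnS_gt.
have [c /andP[c_gt0 x_le_c] c_min] := ex_minnP ex_ge.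
by exists c; split=> // n n_gt0 x_le_n; apply: c_min; rewrite n_gt0.
Qed.

Lemma le_levy_conc (d : measure_display) (T : measurableType d) (R : realType)
    (P : probability T R) (X : {RV P >-> R}) (e x0 : R) :
  (P (X @^-1` `[x0, (x0 + e)%R]) <= levy_conc X e)%E.
Proof. by apply: ereal_sup_ubound; exists x0. Qed.

Section positive_integer_valued.
Variables (R : realType) (d : measure_display) (T : measurableType d).
Variables (P : probability T R) (Y : {RV P >-> R}).
Hypothesis Y_pos_nat : forall w, exists n : nat, (0 < n)%N /\ Y w = n%:R.

Lemma window_one_setC (e : R) :
  Y @^-1` `[1, 1 + e] = ~` (Y @^-1` `]1 + e, +oo[).
Proof.
apply/seteqP; split => w /=; have [n [n_gt0 ->]] := Y_pos_nat w.
  by rewrite !in_itv /= andbT => /andP[_ n_le]; rewrite ltNge n_le.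
by rewrite !in_itv /= andbT ler1n n_gt0 leNgt => /negP.
Qed.

Lemma prob_window_one (e : R) :
  P (Y @^-1` `[1, 1 + e]) = (1 - P (Y @^-1` `](1 + e)%R, +oo[))%E.
Proof. by rewrite window_one_setC probability_setC //; exact: measurable_funPTI. Qed.

Hypothesis pmass_nonincr :
  forall n m : nat, (0 < n)%N -> (n <= m)%N -> (pmass Y m <= pmass Y n)%E.

Variable e : R.
Hypothesis e_ge0 : 0 <= e.

Lemma window_shift (c : nat) : (0 < c)%N ->
  (P (Y @^-1` `[c.+1%:R, (c.+1%:R + e)%R]) <= P (Y @^-1` `[c%:R, (c%:R + e)%R]))%E.
Proof.
move=> c_gt0.
set A := Y @^-1` _; set B := Y @^-1` _.
have mA : measurable A by exact: measurable_funPTI.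
have mB : measurable B by exact: measurable_funPTI.
apply: le_measure_setD => //.
have [->|/set0P[w [Aw nBw]]] := eqVneq (A `\` B) set0; first by rewrite measure0.
have [n [_ Yw]] := Y_pos_nat w.
have in_gap w' : (A `\` B) w' -> c%:R + e < Y w' <= c%:R + e + 1.
  rewrite /A /B /= !in_itv /= -natr1 => -[/andP[lo hi]] /negP.
  by rewrite negb_and -!ltNge => /orP[] ?; apply/andP; split; lra.
have AB_atom : A `\` B `<=` Y @^-1` [set n%:R].
  move=> w' ABw'; have [n' [_ Yw']] := Y_pos_nat w'.
  rewrite /= Yw'; congr (_%:R); apply: (@eq_natr_unit_itv R (c%:R + e)).
    by rewrite -Yw'; exact: in_gap.
  by rewrite -Yw; exact: in_gap.
have c_le_n : (c <= n)%N.
  have /andP[lt_cn _] := in_gap w (conj Aw nBw); rewrite Yw in lt_cn.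
  by rewrite -(ler_nat R); apply/ltW/(le_lt_trans _ lt_cn); rewrite lerDl.
have atom_BA : Y @^-1` [set c%:R] `<=` B `\` A.
  move=> w' /= Yw'; rewrite /B /A /= Yw' !in_itv /= lexx lerDl e_ge0.
  by split=> //; rewrite ler_nat ltnn.
apply: (le_trans (le_measure _ _ _ AB_atom)); rewrite ?inE //.
  exact: measurableD.
apply: le_trans (pmass_nonincr c_gt0 c_le_n) _.
by apply: le_measure; rewrite ?inE //; exact: measurableD.
Qed.

Lemma window_le_window_one (c : nat) : (0 < c)%N ->
  (P (Y @^-1` `[c%:R, (c%:R + e)%R]) <= P (Y @^-1` `[1%R, (1 + e)%R]))%E.
Proof.
elim: c => [//|[_ _|c IH _]]; first by rewrite mulr1n.
exact: le_trans (window_shift (ltn0Sn c)) (IH (ltn0Sn c)).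
Qed.

Lemma levy_conc_eq_window_one : levy_conc Y e = P (Y @^-1` `[1, 1 + e]).
Proof.
apply/le_anti/andP; split; last exact: le_levy_conc.
apply/ereal_supP => _ [x0 _ <-].
have [c [c_gt0 x0_le_c c_min]] := least_pos_nat_ge x0.
apply: le_trans (window_le_window_one c_gt0).
apply: le_measure; rewrite ?inE; try exact: measurable_funPTI.
move=> w /=; have [n [n_gt0 ->]] := Y_pos_nat w; rewrite !in_itv /=.
move=> /andP[x0_le_n n_le]; apply/andP; split.
  by rewrite ler_nat c_min.
by apply: le_trans n_le _; rewrite lerD2r.
Qed.

End positive_integer_valued.

Theorem proposition3p2 (R : realType)
  (d1 : measure_display) (T1 : measurableType d1) (P1 : probability T1 R)
  (d2 : measure_display) (T2 : measurableType d2) (P2 : probability T2 R)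
  (X : {RV P1 >-> R}) (Y : {RV P2 >-> R}) :
  (forall w, exists n : nat, (0 < n)%N /\ X w = n%:R) ->
  (forall w, exists n : nat, (0 < n)%N /\ Y w = n%:R) ->
  (forall n m : nat, (0 < n)%N -> (n <= m)%N -> (pmass X m <= pmass X n)%E) ->
  (forall n m : nat, (0 < n)%N -> (n <= m)%N -> (pmass Y m <= pmass Y n)%E) ->
  (forall t : R, (P1 (X @^-1` `]t, +oo[) <= P2 (Y @^-1` `]t, +oo[))%E) ->
  forall e : R, 0 < e -> (levy_conc Y e <= levy_conc X e)%E.
Proof.
move=> X_pos_nat Y_pos_nat _ Y_nonincr X_le_st_Y e e_gt0.
rewrite (levy_conc_eq_window_one Y_pos_nat Y_nonincr (ltW e_gt0)).
apply: le_trans (le_levy_conc X e 1).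
rewrite !prob_window_one //.
exact: leeB (lexx _) (X_le_st_Y _).
Qed.
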